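(* For every $\lambda$ and all $(x,p)$ with pairwise distinct $x_i$, $$\mathbf{e}^T(\lambda-L)^\vee\mathbf{e}=\operatorname{tr}\big((\lambda-L)^\vee\big)=\Delta'(\lambda),$$ and moreover $\{\operatorname{tr}L,\mathcal{G}(\lambda)\}_0=\{\operatorname{tr}L,\mathcal{E}(\lambda)\}_0=\Delta'(\lambda)$, where $\mathcal{G}(\lambda)=\operatorname{tr}(X(\lambda-L)^\vee)$ and $\mathcal{E}(\lambda)=\mathbf{x}^T(\lambda-L)^\vee\mathbf{e}$.
   Context: Fix $n\ge1$. On the open subset of $\mathbb{R}^{2n}$ with coordinates $(x_1,\dots,x_n,p_1,\dots,p_n)$ where the $x_i$ are pairwise distinct, let $L$ be the $n\times n$ matrix with $L_{ij}=p_i\delta_{ij}+(1-\delta_{ij})/(x_i-x_j)$ and $X=\mathrm{diag}(x_1,\dots,x_n)$. $A^\vee$ denotes the adjugate of a square matrix $A$. $\Delta(\lambda)=\det(\lambda\,\mathrm{Id}-L)$, $\Delta'(\lambda)=\frac{d}{d\lambda}\Delta(\lambda)$, $\mathbf{e}=(1,\dots,1)^T$, $\mathbf{x}=(x_1,\dots,x_n)^T$. $\{\cdot,\cdot\}_0$ is the canonical bracket with $\{p_i,x_j\}_0=\delta_{ij}$, $\{x_i,x_j\}_0=\{p_i,p_j\}_0=0$. *)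

From HB Require Import structures.
From mathcomp Require Import all_boot all_order all_algebra.
Set Implicit Arguments. Unset Strict Implicit. Unset Printing Implicit Defensive.
Import Order.TTheory GRing.Theory Num.Theory.
Local Open Scope ring_scope.

Section CM.
Variables (R : realFieldType) (n : nat).

Definition Lmat (x p : 'I_n -> R) : 'M[R]_n :=
  \matrix_(i, j) (if i == j then p i else (x i - x j)^-1).

Definition Xmat (x : 'I_n -> R) : 'M[R]_n := diag_mx (\row_i x i).

Definition adjL (lam : R) (x p : 'I_n -> R) : 'M[R]_n :=
  \adj (lam%:M - Lmat x p).

(* Delta'(lambda): derivative of the characteristic polynomial
   det(lambda Id - L) (char_poly uses the convention det('X Id - A)). *)
Definition DeltaP (lam : R) (x p : 'I_n -> R) : R :=
  (char_poly (Lmat x p))^`().[lam].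

Definition trL (x p : 'I_n -> R) : R := \tr (Lmat x p).
Definition Gfun (lam : R) (x p : 'I_n -> R) : R := \tr (Xmat x *m adjL lam x p).
Definition Efun (lam : R) (x p : 'I_n -> R) : R :=
  \sum_i \sum_j x i * adjL lam x p i j.

Definition upd (v : 'I_n -> R) (i : 'I_n) (t : R) : 'I_n -> R :=
  fun j => if j == i then t else v j.

End CM.

Definition is_deriv (R : realFieldType) (f : R -> R) (a l : R) : Prop :=
  forall eps : R, 0 < eps -> exists2 d : R, 0 < d &
    forall h : R, 0 < `|h| < d -> `|(f (a + h) - f a) / h - l| < eps.

(* the canonical bracket {f,g}_0 at (x,p) equals v, where
   {f,g}_0 = sum_i (df/dp_i dg/dx_i - df/dx_i dg/dp_i), so {p_i,x_j}_0 = delta_ij,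
   and all partial derivatives involved exist. *)
Definition bracket0_is (R : realFieldType) (n : nat)
    (f g : ('I_n -> R) -> ('I_n -> R) -> R) (x p : 'I_n -> R) (v : R) : Prop :=
  exists (fx fp gx gp : 'I_n -> R),
    [/\ forall i, is_deriv (fun t => f (upd x i t) p) (x i) (fx i),
        forall i, is_deriv (fun t => f x (upd p i t)) (p i) (fp i),
        forall i, is_deriv (fun t => g (upd x i t) p) (x i) (gx i),
        forall i, is_deriv (fun t => g x (upd p i t)) (p i) (gp i) &
        v = \sum_i (fp i * gx i - fx i * gp i)].

From HB Require Import structures.
From mathcomp Require Import all_boot all_order all_algebra.
From mathcomp Require Import ring lra.
From Stdlib Require Import FunctionalExtensionality.
Set Implicit Arguments. Unset Strict Implicit. Unset Printing Implicit Defensive.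
Import Order.TTheory GRing.Theory Num.Theory.
Local Open Scope ring_scope.

(* Differentiating det('X - L) entry by entry gives Jacobi's formula
   Delta' = tr (lambda - L)^adj.  For the Calogero-Moser matrix one has
   [X, L] = e e^T - 1, and since the adjugate commutes with lambda - L,
   tr ((lambda - L)^adj [X, L]) = 0, i.e. e^T (lambda - L)^adj e = tr (lambda - L)^adj.
   As tr L = sum_i p_i, the bracket {tr L, F}_0 is sum_i dF/dx_i, the derivative
   of F along the diagonal translation x + t e.  This operator is a derivation,
   and it kills every entry of L, which depends on x only through the differences
   x_i - x_j; hence it kills every entry of the adjugate, and it maps
   G = sum_m x_m A_mm and E = sum_ij x_i A_ij (A the adjugate) to tr A and
   e^T A e respectively, both equal to Delta'. *)

Section Jacobi.
Variable R : comNzRingType.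

Lemma deriv_big_prod (I : eqType) (r : seq I) (F : I -> {poly R}) : uniq r ->
  (\prod_(i <- r) F i)^`() = \sum_(i <- r) (F i)^`() * \prod_(j <- r | j != i) F j.
Proof.
elim: r => [|a r IHr] /=; first by rewrite !big_nil derivC.
case/andP=> a_notin_r uniq_r.
rewrite !big_cons derivM IHr // eqxx /=; congr (_ * _ + _).
  rewrite big_seq_cond [RHS]big_seq_cond; apply: eq_bigl => j.
  case jr: (j \in r) => //=; apply/esym/eqP => ja.
  by rewrite -ja jr in a_notin_r.
rewrite big_distrr /= big_seq [RHS]big_seq; apply: eq_bigr => i ir.
rewrite big_cons mulrCA; case: eqP => // ai.
by rewrite ai ir in a_notin_r.
Qed.

Lemma deriv_char_poly n (A : 'M[R]_n) :
  (char_poly A)^`() = \tr (\adj (char_poly_mx A)).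
Proof.
rewrite /char_poly /determinant (big_morph _ (@derivD R) (@deriv0 R)).
under eq_bigr do
  rewrite -(rmorph_sign polyC) deriv_mulC deriv_big_prod ?index_enum_uniq // big_distrr.
rewrite exchange_big /=; apply: eq_bigr => i _.
rewrite mxE expand_cofactor [RHS]big_mkcond /=; apply: eq_bigr => s _.
rewrite rmorph_sign !mxE derivB derivMn derivX derivC subr0 mulrA mulrnAr mulr1.
rewrite eq_sym; case: eqP => _; last by rewrite mulr0n mul0r.
by rewrite mulr1n; congr (_ * _); apply: eq_bigl => k; rewrite eq_sym.
Qed.

Lemma horner_deriv_char_poly n (A : 'M[R]_n) (lam : R) :
  (char_poly A)^`().[lam] = \tr (\adj (lam%:M - A)).
Proof.
have -> : lam%:M - A = map_mx (horner_eval lam) (char_poly_mx A).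
  by apply/matrixP => i j; rewrite !mxE /horner_eval hornerD hornerN hornerMn hornerX hornerC.
rewrite deriv_char_poly /mxtrace horner_sum; apply: eq_bigr => i _.
by rewrite -map_mx_adj [RHS]mxE.
Qed.

Lemma sum_adj_eq_tr n (A X : 'M[R]_n) :
  A *m X - X *m A = const_mx 1 - 1%:M -> \sum_i \sum_j \adj A i j = \tr (\adj A).
Proof.
move=> commAX; set B := \adj A.
have trB_comm : \tr (B *m (A *m X - X *m A)) = 0.
  rewrite mulmxBr linearB /= !mulmxA mul_adj_mx [X in _ - X]mxtrace_mulC mulmxA.
  by rewrite mul_mx_adj subrr.
have trB_ones : \tr (B *m const_mx 1) = \sum_i \sum_j B i j.
  by apply: eq_bigr => i _; rewrite mxE; under eq_bigr do rewrite [const_mx _ _ _]mxE mulr1.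
rewrite commAX mulmxBr mulmx1 linearB /= trB_ones in trB_comm.
by apply/eqP; rewrite -subr_eq0 trB_comm.
Qed.

End Jacobi.

Section QuadraticDerivative.
Variable R : realFieldType.
Implicit Types (f g : R -> R) (a b c l m : R).

(* Differentiability with a quadratic bound on the remainder: it holds for all the
   rational functions below and is closed under products by a direct estimate. *)
Definition qderiv f a l := exists K : R, exists2 d : R, 0 < d &
  forall h, `|h| < d -> `|f (a + h) - f a - l * h| <= K * h ^+ 2.

Lemma eq_qderiv f g a l : f =1 g -> qderiv f a l -> qderiv g a l.
Proof. by move=> fg [K [d d0 H]]; exists K; exists d => // h hd; rewrite -!fg; apply: H. Qed.

Lemma qderiv_cst c a : qderiv (fun=> c) a 0.
Proof. by exists 0; exists 1 => // h _; rewrite !mul0r subrr subr0 normr0. Qed.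

Lemma qderiv_id a : qderiv id a 1.
Proof. by exists 0; exists 1 => // h _; rewrite mul1r mul0r (addrC a) addrK subrr normr0. Qed.

Lemma qderivD f g a l m : qderiv f a l -> qderiv g a m ->
  qderiv (fun t => f t + g t) a (l + m).
Proof.
move=> [K1 [d1 d10 H1]] [K2 [d2 d20 H2]].
exists (K1 + K2); exists (Num.min d1 d2); first by rewrite lt_min d10.
move=> h; rewrite lt_min => /andP [h1 h2].
have -> : f (a + h) + g (a + h) - (f a + g a) - (l + m) * h =
   (f (a + h) - f a - l * h) + (g (a + h) - g a - m * h) by ring.
by apply: (le_trans (ler_normD _ _)); rewrite mulrDl lerD ?H1 ?H2.
Qed.

Lemma qderiv_lipschitz f a l : qderiv f a l ->
  exists C : R, exists2 d : R, 0 < d & forall h, `|h| < d -> `|f (a + h) - f a| <= C * `|h|.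
Proof.
move=> [K [d d0 H]]; exists (`|K| + `|l|); exists (Num.min d 1); first by rewrite lt_min d0 ltr01.
move=> h; rewrite lt_min => /andP [hd h1].
have -> : f (a + h) - f a = (f (a + h) - f a - l * h) + l * h by ring.
apply: (le_trans (ler_normD _ _)); rewrite normrM mulrDl lerD2r.
apply: (le_trans (H h hd)); rewrite -[h ^+ 2]real_normK ?num_real //.
apply: (le_trans (ler_wpM2r (sqr_ge0 _) (ler_norm K))); rewrite ler_wpM2l //.
by rewrite expr2 ler_piMl // ltW.
Qed.

Lemma qderivM f g a l m : qderiv f a l -> qderiv g a m ->
  qderiv (fun t => f t * g t) a (l * g a + f a * m).
Proof.
move=> [K1 [d1 d10 H1]] gm; have [K2 [d2 d20 H2]] := gm.
have [C [d3 d30 Hg]] := qderiv_lipschitz gm.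
exists (`|K1| * (`|g a| + `|C|) + `|f a| * `|K2| + `|l| * `|C|).
exists (Num.min 1 (Num.min d1 (Num.min d2 d3))); first by rewrite !lt_min ltr01 d10 d20.
move=> h; rewrite !lt_min => /and4P [h1 hd1 hd2 hd3].
move: (H1 h hd1) (H2 h hd2) (Hg h hd3).
set F := f (a + h) - f a - l * h; set G := g (a + h) - g a - m * h.
set dg := g (a + h) - g a; move=> nF nG ng.
have -> : f (a + h) * g (a + h) - f a * g a - (l * g a + f a * m) * h =
    F * (g a + dg) + f a * G + l * h * dg by rewrite /F /G /dg; ring.
have hh : h ^+ 2 = `|h| * `|h| by rewrite -expr2 real_normK ?num_real.
rewrite hh in nF nG *.
have nF' : `|F| <= `|K1| * (`|h| * `|h|).
  by apply: le_trans nF _; rewrite ler_wpM2r ?mulr_ge0 ?ler_norm.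
have nG' : `|G| <= `|K2| * (`|h| * `|h|).
  by apply: le_trans nG _; rewrite ler_wpM2r ?mulr_ge0 ?ler_norm.
have ng' : `|dg| <= `|C| * `|h| by apply: le_trans ng _; rewrite ler_wpM2r ?ler_norm.
have ngs : `|g a + dg| <= `|g a| + `|C|.
  apply: le_trans (ler_normD _ _) _; rewrite lerD2l; apply: le_trans ng' _.
  by rewrite ler_piMr // ltW.
apply: le_trans (ler_normD _ _) _; apply: le_trans (lerD (ler_normD _ _) (lexx _)) _.
rewrite !normrM !mulrDl -!addrA; apply: lerD; last apply: lerD.
- by rewrite [X in _ <= X]mulrAC; apply: ler_pM.
- by rewrite -mulrA ler_wpM2l.
- by rewrite -!mulrA ler_wpM2l // mulrCA ler_wpM2l.
Qed.

Lemma qderivN f a l : qderiv f a l -> qderiv (fun t => - f t) a (- l).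
Proof.
move=> [K [d d0 H]]; exists K; exists d => // h /H.
have -> : - f (a + h) - - f a - - l * h = - (f (a + h) - f a - l * h) by ring.
by rewrite normrN.
Qed.

Lemma qderiv_inv_subr b a : a != b ->
  qderiv (fun t => (t - b)^-1) a (- ((a - b)^-1) ^+ 2).
Proof.
move=> ab; have e0 : a - b != 0 by rewrite subr_eq0.
set e := a - b in e0 *.
have ne0 : 0 < `|e| by rewrite normr_gt0.
exists (2 / `|e| ^+ 3); exists (`|e| / 2); first by rewrite divr_gt0.
move=> h hd.
have hw : `|e| <= `|e + h| + `|h|.
  by have := ler_normD (e + h) (- h); rewrite addrK normrN.
have eh0 : e + h != 0 by rewrite -normr_gt0; lra.
have -> : (a + h - b)^-1 - e^-1 - - e^-1 ^+ 2 * h = h ^+ 2 / (e ^+ 2 * (e + h)).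
  have -> : a + h - b = e + h by rewrite /e; ring.
  by field; rewrite eh0 e0.
rewrite normf_div normrX (normrM (e ^+ 2)) normrX -(real_normK (num_real h)).
set ne := `|e| in ne0 hd hw *; set w := `|e + h| in hw *; set u := `|h| in hd hw *.
have w0 : 0 < w by lra.
rewrite ler_pdivrMr ?mulr_gt0 ?exprn_gt0 //.
have -> : 2 / ne ^+ 3 * u ^+ 2 * (ne ^+ 2 * w) = u ^+ 2 * (2 * w / ne).
  by field; rewrite gt_eqF.
have w_ge : 1 <= 2 * w / ne by rewrite ler_pdivlMr // mul1r; lra.
by rewrite ler_peMr ?sqr_ge0.
Qed.

Lemma qderiv_is_deriv f a l : qderiv f a l -> is_deriv f a l.
Proof.
move=> [K [d d0 H]] eps eps0.
have K1_gt0 : 0 < `|K| + 1 by rewrite ltr_wpDl.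
exists (Num.min d (eps / (`|K| + 1))); first by rewrite lt_min d0 divr_gt0.
move=> h /andP [h0]; rewrite lt_min => /andP [hd heps].
have hn0 : h != 0 by rewrite -normr_gt0.
have -> : (f (a + h) - f a) / h - l = (f (a + h) - f a - l * h) / h by field.
rewrite normf_div ltr_pdivrMr //; apply: le_lt_trans (H h hd) _.
rewrite -(real_normK (num_real h)) expr2 mulrA ltr_pM2r //.
rewrite ltr_pdivlMr // in heps.
have := ler_norm K; nra.
Qed.

End QuadraticDerivative.

Section RingClosedFun.
Variables (T : Type) (R : comNzRingType) (P : (T -> R) -> Prop).
Hypotheses (P_ext : forall f g, f =1 g -> P f -> P g) (P_cst : forall c, P (fun=> c))
  (P_add : forall f g, P f -> P g -> P (fun y => f y + g y))
  (P_mul : forall f g, P f -> P g -> P (fun y => f y * g y)).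

Lemma closed_big_sum (I : Type) (r : seq I) (F : I -> T -> R) :
  (forall i, P (F i)) -> P (fun y => \sum_(i <- r) F i y).
Proof.
move=> PF; elim: r => [|i r IHr]; first by apply: P_ext (P_cst 0) => y; rewrite big_nil.
by apply: P_ext (P_add (PF i) IHr) => y; rewrite big_cons.
Qed.

Lemma closed_big_prod (I : Type) (r : seq I) (F : I -> T -> R) :
  (forall i, P (F i)) -> P (fun y => \prod_(i <- r) F i y).
Proof.
move=> PF; elim: r => [|i r IHr]; first by apply: P_ext (P_cst 1) => y; rewrite big_nil.
by apply: P_ext (P_mul (PF i) IHr) => y; rewrite big_cons.
Qed.

Lemma closed_det m (M : T -> 'M[R]_m) :
  (forall i j, P (fun y => M y i j)) -> P (fun y => \det (M y)).
Proof.
move=> PM; apply: closed_big_sum => s.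
by apply: P_mul (P_cst _) _; apply: closed_big_prod => i; apply: PM.
Qed.

Lemma closed_adj m (M : T -> 'M[R]_m) :
  (forall i j, P (fun y => M y i j)) -> forall i j, P (fun y => \adj (M y) i j).
Proof.
move=> PM i j.
apply: P_ext (P_mul (P_cst _) (closed_det (M := fun y => row' j (col' i (M y))) _)).
  by move=> y; rewrite mxE.
by move=> k l; apply: P_ext (PM _ _) => y; rewrite !mxE.
Qed.

End RingClosedFun.

Lemma sum_natr_eq (R : nzSemiRingType) (I : finType) (m : I) :
  \sum_k ((k == m)%:R : R) = 1.
Proof. by rewrite (bigD1 m) //= eqxx big1 ?addr0 // => k /negbTE ->. Qed.

Section SumOfPartialDerivatives.
Variables (R : realFieldType) (n : nat) (a : 'I_n -> R).
Implicit Types (phi psi : ('I_n -> R) -> R) (s u : R).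

(* The derivative of phi at a along the diagonal direction (1, ..., 1), taken as the
   sum of the partial derivatives; it obeys the Leibniz rule, so the functions it
   kills form a subring. *)
Definition sum_pderiv phi s := exists d : 'I_n -> R,
  (forall k, qderiv (fun t => phi (upd a k t)) (a k) (d k)) /\ \sum_k d k = s.

Definition pderivable phi := exists s, sum_pderiv phi s.

Lemma upd_id k : upd a k (a k) = a.
Proof. by apply: functional_extensionality => j; rewrite /upd; case: eqP => [->|]. Qed.

Lemma eq_sum_pderiv phi psi s : phi =1 psi -> sum_pderiv phi s -> sum_pderiv psi s.
Proof.
move=> e [d [Hd <-]]; exists d; split => // k.
by apply: eq_qderiv (Hd k) => t; rewrite e.
Qed.

Lemma sum_pderiv_cst c : sum_pderiv (fun=> c) 0.
Proof. by exists (fun=> 0); split; [move=> k; apply: qderiv_cst | rewrite big1]. Qed.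

Lemma sum_pderiv_coord m : sum_pderiv (fun y => y m) 1.
Proof.
exists (fun k => (k == m)%:R); split; last exact: sum_natr_eq.
move=> k /=; case: (eqVneq k m) => [->|km].
  by apply: eq_qderiv (qderiv_id _) => t; rewrite /upd eqxx.
by apply: eq_qderiv (qderiv_cst (a m) _) => t; rewrite /upd eq_sym (negbTE km).
Qed.

Lemma sum_pderivD phi psi s u : sum_pderiv phi s -> sum_pderiv psi u ->
  sum_pderiv (fun y => phi y + psi y) (s + u).
Proof.
move=> [d [Hd <-]] [e [He <-]]; exists (fun k => d k + e k); split.
  by move=> k; apply: qderivD.
by rewrite big_split.
Qed.

Lemma sum_pderivM phi psi s u : sum_pderiv phi s -> sum_pderiv psi u ->
  sum_pderiv (fun y => phi y * psi y) (s * psi a + phi a * u).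
Proof.
move=> [d [Hd <-]] [e [He <-]]; exists (fun k => d k * psi a + phi a * e k); split.
  by move=> k; have := qderivM (Hd k) (He k); rewrite upd_id.
by rewrite big_split /= -mulr_suml -mulr_sumr.
Qed.

Lemma sum_pderiv_big_sum (I : Type) (r : seq I) (F : I -> ('I_n -> R) -> R) (v : I -> R) :
  (forall i, sum_pderiv (F i) (v i)) ->
  sum_pderiv (fun y => \sum_(i <- r) F i y) (\sum_(i <- r) v i).
Proof.
move=> HF; elim: r => [|i r IHr].
  by rewrite big_nil; apply: eq_sum_pderiv (sum_pderiv_cst 0) => y; rewrite big_nil.
by rewrite big_cons; apply: eq_sum_pderiv (sum_pderivD (HF i) IHr) => y; rewrite big_cons.
Qed.

Lemma eq_pderivable phi psi : phi =1 psi -> pderivable phi -> pderivable psi.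
Proof. by move=> e [s Hs]; exists s; apply: eq_sum_pderiv Hs. Qed.

Lemma pderivable_cst c : pderivable (fun=> c).
Proof. by exists 0; apply: sum_pderiv_cst. Qed.

Lemma pderivable_coord m : pderivable (fun y => y m).
Proof. by exists 1; apply: sum_pderiv_coord. Qed.

Lemma pderivableD phi psi : pderivable phi -> pderivable psi ->
  pderivable (fun y => phi y + psi y).
Proof. by move=> [s Hs] [u Hu]; exists (s + u); apply: sum_pderivD. Qed.

Lemma pderivableM phi psi : pderivable phi -> pderivable psi ->
  pderivable (fun y => phi y * psi y).
Proof. by move=> [s Hs] [u Hu]; eexists; apply: sum_pderivM Hs Hu. Qed.

Lemma pderivable_big_sum (I : Type) (r : seq I) (F : I -> ('I_n -> R) -> R) :
  (forall i, pderivable (F i)) -> pderivable (fun y => \sum_(i <- r) F i y).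
Proof.
apply: (closed_big_sum (P := pderivable)).
- exact: eq_pderivable.
- exact: pderivable_cst.
- exact: pderivableD.
Qed.

Lemma pderivable_adj m (M : ('I_n -> R) -> 'M[R]_m) :
  (forall i j, pderivable (fun y => M y i j)) ->
  forall i j, pderivable (fun y => \adj (M y) i j).
Proof.
apply: (closed_adj (P := pderivable)).
- exact: eq_pderivable.
- exact: pderivable_cst.
- exact: pderivableD.
- exact: pderivableM.
Qed.

Lemma sum_pderiv_adj0 m (M : ('I_n -> R) -> 'M[R]_m) :
  (forall i j, sum_pderiv (fun y => M y i j) 0) ->
  forall i j, sum_pderiv (fun y => \adj (M y) i j) 0.
Proof.
apply: (closed_adj (P := sum_pderiv^~ 0)) => [phi psi|c|phi psi Hphi Hpsi|phi psi Hphi Hpsi].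
- exact: eq_sum_pderiv.
- exact: sum_pderiv_cst.
- by have := sum_pderivD Hphi Hpsi; rewrite addr0.
- by have := sum_pderivM Hphi Hpsi; rewrite mul0r mulr0 addr0.
Qed.

End SumOfPartialDerivatives.

Lemma mxtrace_Xmat_mul (R : realFieldType) n (y : 'I_n -> R) (B : 'M[R]_n) :
  \tr (Xmat y *m B) = \sum_m y m * B m m.
Proof. by apply: eq_bigr => m _; rewrite mul_diag_mx !mxE. Qed.

Section TraceBracket.
Variables (R : realFieldType) (n : nat) (x p : 'I_n -> R).

Lemma trLE (y q : 'I_n -> R) : trL y q = \sum_k q k.
Proof. by apply: eq_bigr => k _; rewrite mxE eqxx. Qed.

Lemma qderiv_trL_x i : qderiv (fun t => trL (upd x i t) p) (x i) 0.
Proof. by apply: eq_qderiv (qderiv_cst (\sum_k p k) _) => t; rewrite !trLE. Qed.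

Lemma qderiv_trL_p i : qderiv (fun t => trL x (upd p i t)) (p i) 1.
Proof.
rewrite -[1]addr0.
apply: eq_qderiv (qderivD (qderiv_id _) (qderiv_cst (\sum_(k | k != i) p k) _)) => t.
rewrite trLE [RHS](bigD1 i) //= /upd eqxx; congr (_ + _).
by apply: eq_bigr => k /negbTE ->.
Qed.

Lemma bracket0_trL (g : ('I_n -> R) -> ('I_n -> R) -> R) (s : R) :
  sum_pderiv x (fun y => g y p) s -> pderivable p (fun q => g x q) ->
  bracket0_is (@trL R n) g x p s.
Proof.
move=> [gx [Hgx <-]] [_ [gp [Hgp _]]].
exists (fun=> 0), (fun=> 1), gx, gp; split => [i|i|i|i|].
- exact/qderiv_is_deriv/qderiv_trL_x.
- exact/qderiv_is_deriv/qderiv_trL_p.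
- exact/qderiv_is_deriv/Hgx.
- exact/qderiv_is_deriv/Hgp.
- by apply: eq_bigr => i _; rewrite mul1r mul0r subr0.
Qed.

End TraceBracket.

Section CalogeroMoser.
Variables (R : realFieldType) (n : nat) (lam : R) (x p : 'I_n -> R).
Hypothesis x_inj : injective x.

Lemma Lmat_commutator : Xmat x *m Lmat x p - Lmat x p *m Xmat x = const_mx 1 - 1%:M.
Proof.
apply/matrixP => i j; rewrite /Xmat mul_diag_mx mul_mx_diag !mxE.
case: eqP => [->|/eqP ij]; first by rewrite mulrC !subrr.
have xij : x i - x j != 0 by rewrite subr_eq0 (inj_eq x_inj).
by rewrite subr0 mulrC -mulrBr mulVf.
Qed.

Lemma sum_adjL_eq_tr : \sum_i \sum_j adjL lam x p i j = \tr (adjL lam x p).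
Proof.
apply: sum_adj_eq_tr (Xmat x) _; rewrite -Lmat_commutator mulmxBl mulmxBr.
by rewrite mul_scalar_mx mul_mx_scalar opprB addrC addrA subrK.
Qed.

Lemma tr_adjL_eq_DeltaP : \tr (adjL lam x p) = DeltaP lam x p.
Proof. by rewrite /DeltaP horner_deriv_char_poly. Qed.

Lemma sum_pderiv_inv_sub i j : i != j -> sum_pderiv x (fun y => (y i - y j)^-1) 0.
Proof.
move=> ij; have xij : x i != x j by rewrite (inj_eq x_inj).
pose c := - ((x i - x j)^-1) ^+ 2.
exists (fun k => c * (k == i)%:R - c * (k == j)%:R); split; last first.
  by rewrite sumrB -!mulr_sumr !sum_natr_eq subrr.
move=> k /=; case: (eqVneq k i) => [->|ki].
  rewrite (negbTE ij) mulr1 mulr0 subr0.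
  by apply: eq_qderiv (qderiv_inv_subr xij) => t; rewrite /upd eqxx eq_sym (negbTE ij).
case: (eqVneq k j) => [->|kj].
  rewrite mulr1 mulr0 sub0r.
  have xji : x j != x i by rewrite eq_sym.
  have := qderivN (qderiv_inv_subr xji).
  rewrite /c !opprK -[x j - x i]opprB invrN sqrrN; apply: eq_qderiv => t.
  by rewrite /upd eqxx (negbTE ij) -invrN opprB.
rewrite !mulr0 subr0; apply: eq_qderiv (qderiv_cst ((x i - x j)^-1) _) => t.
by rewrite /upd eq_sym (negbTE ki) eq_sym (negbTE kj).
Qed.

Lemma sum_pderiv_adjL_x i j : sum_pderiv x (fun y => adjL lam y p i j) 0.
Proof.
apply: (sum_pderiv_adj0 (M := fun y => lam%:M - Lmat y p)) => k l.
case: (eqVneq k l) => [<-|kl].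
  by apply: eq_sum_pderiv (sum_pderiv_cst _ (lam - p k)) => y; rewrite !mxE eqxx.
apply: eq_sum_pderiv (sum_pderiv_inv_sub (_ : l != k)) => [y|]; last by rewrite eq_sym.
by rewrite !mxE (negbTE kl) sub0r -invrN opprB.
Qed.

Lemma pderivable_adjL_p i j : pderivable p (fun q => adjL lam x q i j).
Proof.
apply: (pderivable_adj (M := fun q => lam%:M - Lmat x q)) => k l.
case: (eqVneq k l) => [<-|kl].
  apply: eq_pderivable (pderivableD (pderivable_cst _ lam)
    (pderivableM (pderivable_cst _ (-1)) (pderivable_coord _ k))) => q.
  by rewrite !mxE eqxx mulN1r.
apply: eq_pderivable (pderivable_cst _ (- (x k - x l)^-1)) => q.
by rewrite !mxE (negbTE kl) sub0r.
Qed.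

Lemma sum_pderiv_Gfun : sum_pderiv x (fun y => Gfun lam y p) (\tr (adjL lam x p)).
Proof.
apply: eq_sum_pderiv (sum_pderiv_big_sum (index_enum 'I_n) _) => [y|m].
  by rewrite /Gfun mxtrace_Xmat_mul.
have := sum_pderivM (sum_pderiv_coord x m) (sum_pderiv_adjL_x m m).
by rewrite mul1r mulr0 addr0.
Qed.

Lemma sum_pderiv_Efun : sum_pderiv x (fun y => Efun lam y p) (\tr (adjL lam x p)).
Proof.
rewrite -sum_adjL_eq_tr; apply: sum_pderiv_big_sum => i; apply: sum_pderiv_big_sum => j.
have := sum_pderivM (sum_pderiv_coord x i) (sum_pderiv_adjL_x i j).
by rewrite mul1r mulr0 addr0.
Qed.

Lemma pderivable_Gfun : pderivable p (fun q => Gfun lam x q).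
Proof.
pose F m q := x m * adjL lam x q m m.
apply: eq_pderivable (pderivable_big_sum (index_enum 'I_n) (F := F) _) => [q|m].
  by rewrite /Gfun mxtrace_Xmat_mul.
exact: pderivableM (pderivable_cst _ _) (pderivable_adjL_p m m).
Qed.

Lemma pderivable_Efun : pderivable p (fun q => Efun lam x q).
Proof.
apply: pderivable_big_sum => i; apply: pderivable_big_sum => j.
exact: pderivableM (pderivable_cst _ _) (pderivable_adjL_p i j).
Qed.

End CalogeroMoser.

Theorem mainTheorem7 (R : realFieldType) (n : nat) (lam : R) (x p : 'I_n -> R) :
  (0 < n)%N -> injective x ->
  [/\ \sum_i \sum_j adjL lam x p i j = \tr (adjL lam x p),
      \tr (adjL lam x p) = DeltaP lam x p,
      bracket0_is (@trL R n) (Gfun lam) x p (DeltaP lam x p) &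
      bracket0_is (@trL R n) (Efun lam) x p (DeltaP lam x p)].
Proof.
move=> _ x_inj; rewrite -tr_adjL_eq_DeltaP; split.
- exact: sum_adjL_eq_tr.
- by [].
- exact: bracket0_trL (sum_pderiv_Gfun _ _ x_inj) (pderivable_Gfun _ _ _).
- exact: bracket0_trL (sum_pderiv_Efun _ _ x_inj) (pderivable_Efun _ _ _).
Qed.
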